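(* Let $m,p,q\in(0,\infty)$, let $(u,v)$ be an admissible pair of weights with respect to $(m,p)$, let $w$ be a weight and $C>0$. Then the inequality \[ \left(\int_0^\infty w(t)(f^*(t))^q\,dt\right)^{\frac1q}\le C\left(\int_0^\infty v(t)\left(\int_t^\infty u(s)(f^*(s))^m ds\right)^{\frac pm}dt\right)^{\frac1p} \] holds for all $f\in\mathscr M$ if and only if the inequality \[ \left(\int_0^\infty w(t)(f^*(t))^{\frac qm}\,dt\right)^{\frac mq}\le C^m\left(\int_0^\infty v(t)\left(\int_t^\infty u(s)f^*(s)\,ds\right)^{\frac pm}dt\right)^{\frac mp} \] holds for all $f\in\mathscr M$.
   Context: $\mathscr M$ is the set of real-valued Lebesgue measurable functions on $\mathbb{R}^n$; for $f\in\mathscr M$, $f^*(t):=\inf\{s\ge0:\ |\{x\in\mathbb{R}^n: |f(x)|>s\}|\le t\}$, $t>0$. A weight is a nonnegative measurable function on $(0,\infty)$. For a weight $u$, $U(s,t):=\int_s^t u$; $(u,v)$ is admissible with respect to $(m,p)$ if $0<\left(\int_0^t v(s)U(s,t)^{p/m}ds\right)^{1/p}<\infty$ for all $t\in(0,\infty)$. *)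

From HB Require Import structures.
From mathcomp Require Import all_boot all_order all_algebra.
From mathcomp Require Import all_classical all_reals all_analysis.
Set Implicit Arguments.
Unset Strict Implicit.
Unset Printing Implicit Defensive.
Import Order.TTheory GRing.Theory Num.Theory.
Local Open Scope classical_set_scope.
Local Open Scope ring_scope.

(* R^n is represented by n.-tuple R; coordinate i of x is tnth x i. *)

Definition box (R : realType) (n : nat) (a b : n.-tuple R) : set (n.-tuple R) :=
  [set x | forall i : 'I_n, tnth a i <= tnth x i <= tnth b i]%R.

Definition box_vol (R : realType) (n : nat) (a b : n.-tuple R) : R :=
  \prod_(i < n) Num.max (tnth b i - tnth a i) 0.

Definition leb_outer (R : realType) (n : nat) (A : set (n.-tuple R)) : \bar R :=
  ereal_inf [set S : \bar R | exists a b : nat -> n.-tuple R,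
     A `<=` \bigcup_k box (a k) (b k) /\
     S = (\sum_(0 <= k <oo) (box_vol (a k) (b k))%:E)%E].

Definition leb_measurable (R : realType) (n : nat) (A : set (n.-tuple R)) : Prop :=
  forall E : set (n.-tuple R),
    leb_outer E = (leb_outer (E `&` A) + leb_outer (E `&` ~` A))%E.

Definition leb_measurable_fun (R : realType) (n : nat) (f : n.-tuple R -> R) : Prop :=
  forall a : R, leb_measurable [set x | a < f x].

Definition distribution_fun (R : realType) (n : nat) (f : n.-tuple R -> R) (s : R)
  : \bar R := leb_outer [set x | s < `|f x|].

(* Nonincreasing rearrangement f^*(t) = inf{s >= 0 : |{|f|>s}| <= t}
   (with inf of the empty set = +oo). *)
Definition rearrangement (R : realType) (n : nat) (f : n.-tuple R -> R) (t : R)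
  : \bar R :=
  ereal_inf [set (s%:E)%E | s in [set s : R | 0 <= s /\
                                 (distribution_fun f s <= t%:E)%E]].

Definition ioo (R : realType) (s t : R) : set R := `]s, t[%classic.
Definition ioinf (R : realType) (s : R) : set R := `]s, +oo[%classic.

Definition weight (R : realType) (u : R -> R) : Prop :=
  measurable_fun (ioinf (0:R)) u /\ (forall t : R, 0 < t -> 0 <= u t).

Definition Uint (R : realType) (u : R -> R) (s t : R) : \bar R :=
  (\int[@lebesgue_measure R]_(x in ioo s t) (u x)%:E)%E.

Definition admissible (R : realType) (u v : R -> R) (m p : R) : Prop :=
  forall t : R, 0 < t ->
    let I := ((\int[@lebesgue_measure R]_(s in ioo 0 t) ((v s)%:E * (Uint u s t) `^ (p / m)))
               `^ p^-1)%E in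
    (0 < I)%E /\ (I < +oo)%E.

(** The map [g : y |-> sign(y) |y|^r] is an increasing bijection of R, so
    composing with it preserves Lebesgue measurability, and it only rescales the
    levels of the distribution function; hence the rearrangement of [g o f] is
    the [r]-th power of the rearrangement of [f].  Substituting [g o f] for [f]
    with [r = 1/m] thus turns the [m]-th power of the rearrangement into the
    rearrangement itself, and raising the first inequality to the power [m]
    gives the second. *)
From HB Require Import structures.
From mathcomp Require Import all_boot all_order all_algebra.
From mathcomp Require Import all_classical all_reals all_analysis.
Import Order.TTheory GRing.Theory Num.Theory.
Local Open Scope classical_set_scope.
Local Open Scope ring_scope.

Section SignedPower.
Context {R : realType}.
Implicit Types r x y : R.

Definition signed_powR r y : R := if 0 <= y then y `^ r else - (- y) `^ r.

Lemma signed_powR_ge0 r y : 0 <= y -> signed_powR r y = y `^ r.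
Proof. by rewrite /signed_powR => ->. Qed.

Lemma norm_signed_powR r y : `|signed_powR r y| = `|y| `^ r.
Proof.
rewrite /signed_powR; have [y0|y0] := leP 0 y.
  by rewrite !ger0_norm ?powR_ge0.
by rewrite normrN ger0_norm ?powR_ge0 // ltr0_norm.
Qed.

Lemma signed_powRK r : 0 < r -> cancel (signed_powR r^-1) (signed_powR r).
Proof.
move=> r0 y; rewrite /signed_powR; have [y0|y0] := leP 0 y.
  by rewrite powR_ge0 -powRrM mulVf ?gt_eqF // powRr1.
have y'0 : 0 < (- y) `^ r^-1 by rewrite powR_gt0 // oppr_gt0.
rewrite oppr_ge0 leNgt y'0 /= opprK -powRrM mulVf ?gt_eqF // powRr1 ?opprK //.
by rewrite oppr_ge0 ltW.
Qed.

Lemma ltr_signed_powR r : 0 < r -> {mono signed_powR r : x y / x < y}.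
Proof.
move=> r0; apply/leW_mono/le_mono => x y xy; rewrite /signed_powR.
have [x0|x0] := leP 0 x; have [y0|y0] := leP 0 y.
- by rewrite gt0_ltr_powR.
- by move: (lt_trans xy y0); rewrite ltNge x0.
- by rewrite (lt_le_trans _ (powR_ge0 _ _)) // oppr_lt0 powR_gt0 // oppr_gt0.
- by rewrite ltrN2 gt0_ltr_powR ?nnegrE ?ltrN2 // oppr_ge0 ltW.
Qed.

Lemma lt_signed_powR r x y : 0 < r ->
  (x < signed_powR r y) = (signed_powR r^-1 x < y).
Proof. by move=> r0; rewrite -{1}(signed_powRK _ r0 x) ltr_signed_powR. Qed.

End SignedPower.

Section ExtendedPower.
Context {R : realType}.
Local Open Scope ereal_scope.

Lemma poweRK {r : R} {x : \bar R} : (0 < r)%R -> 0 <= x -> (x `^ r) `^ r^-1 = x.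
Proof. by move=> r0 x0; rewrite -poweRrM mulfV ?gt_eqF // poweRe1. Qed.

Lemma lee_poweR {r : R} {x y : \bar R} : (0 <= r)%R -> 0 <= x -> x <= y ->
  x `^ r <= y `^ r.
Proof.
by move=> r0 x0 xy; rewrite gt0_ler_poweR // in_itv /= ?leey ?x0 ?(le_trans x0 xy).
Qed.

Lemma lee_poweR2 {r : R} {x y : \bar R} : (0 < r)%R -> 0 <= x -> 0 <= y ->
  (x `^ r <= y `^ r) = (x <= y).
Proof.
move=> r0 x0 y0; apply/idP/idP => [|xy]; last by apply: lee_poweR => //; exact: ltW.
have ri0 : (0 <= r^-1)%R by rewrite invr_ge0 ltW.
by move/(lee_poweR ri0 (poweR_ge0 _ _)); rewrite !poweRK.
Qed.

Lemma lee_poweR_scale {A B : \bar R} {C m p q : R} :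
  (0 < m)%R -> (0 < C)%R ->
  A `^ q^-1 <= C%:E * B `^ p^-1 <->
  A `^ (m / q) <= (C `^ m)%:E * B `^ (m / p).
Proof.
move=> m0 C0; have C0' : 0 <= C%:E by rewrite lee_fin ltW.
rewrite -(lee_poweR2 m0) ?mule_ge0 ?poweR_ge0 // poweRM ?poweR_ge0 //.
by rewrite poweR_EFin -!poweRrM !(mulrC m).
Qed.
End ExtendedPower.

Section Rearrangement.
Context {R : realType} {n : nat}.
Implicit Types f : n.-tuple R -> R.

Lemma leb_measurable_fun_comp (phi psi : R -> R) f :
  (forall a y, (a < phi y) = (psi a < y)) ->
  leb_measurable_fun f -> leb_measurable_fun (phi \o f).
Proof.
move=> lt_phi mf a.
rewrite (_ : [set x | _] = [set x | psi a < f x]); first exact: mf.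
by apply/funext => x /=; rewrite lt_phi.
Qed.

Lemma leb_measurable_fun_signed_powR (r : R) f : 0 < r ->
  leb_measurable_fun f -> leb_measurable_fun (signed_powR r \o f).
Proof.
by move=> r0; apply: leb_measurable_fun_comp => a y; rewrite lt_signed_powR.
Qed.

Lemma distribution_fun_signed_powR (r s : R) f : 0 < r -> 0 <= s ->
  distribution_fun (signed_powR r \o f) s = distribution_fun f (s `^ r^-1).
Proof.
move=> r0 s0; rewrite /distribution_fun; congr leb_outer; apply/funext => x /=.
rewrite norm_signed_powR -signed_powR_ge0 // lt_signed_powR //.
by rewrite signed_powR_ge0.
Qed.

Lemma rearrangement_ge0 f t : (0 <= rearrangement f t)%E.
Proof. by apply: le_ereal_inf_tmp => _ [s [s0 _] <-]; rewrite lee_fin. Qed.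

Local Open Scope ereal_scope.

Lemma rearrangement_signed_powR (r : R) f t : (0 < r)%R ->
  rearrangement (signed_powR r \o f) t = rearrangement f t `^ r.
Proof.
move=> r0; have ri0 : (0 < r^-1)%R by rewrite invr_gt0.
(* substitute [s = s'^r] in the infimum defining the rearrangement *)
apply/eqP; rewrite eq_le; apply/andP; split.
- rewrite -(poweRK ri0 (rearrangement_ge0 _ t)) invrK.
  apply/lee_poweR/le_ereal_inf_tmp => [||_ [s [s0 ds] <-]];
    [exact: ltW|exact: poweR_ge0|].
  rewrite -(@poweRK _ r s%:E) ?lee_fin //.
  apply/lee_poweR/ereal_inf_lbound; [exact: ltW|exact: rearrangement_ge0|].
  exists (s `^ r)%R => //; split; first exact: powR_ge0.
  rewrite distribution_fun_signed_powR ?powR_ge0 //.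
  by rewrite -powRrM mulfV ?gt_eqF // powRr1.
- apply: le_ereal_inf_tmp => _ [s [s0 ds] <-].
  rewrite -[s%:E](@poweRK _ r^-1) ?lee_fin // invrK poweR_EFin.
  apply/lee_poweR/ereal_inf_lbound; [exact: ltW|exact: rearrangement_ge0|].
  exists (s `^ r^-1)%R => //; split; first exact: powR_ge0.
  by rewrite -distribution_fun_signed_powR // signed_powR_ge0.
Qed.

Lemma forall_rearrangement_powR (r : R) (P : (R -> \bar R) -> Prop) : (0 < r)%R ->
  (forall f, leb_measurable_fun f -> P (fun t => rearrangement f t `^ r)) <->
  (forall f, leb_measurable_fun f -> P (rearrangement f)).
Proof.
move=> r0; have ri0 : (0 < r^-1)%R by rewrite invr_gt0.
split=> Pf f mf.
- have := Pf _ (leb_measurable_fun_signed_powR _ _ ri0 mf).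
  congr P; apply/funext => t.
  rewrite rearrangement_signed_powR // -poweRrM mulVf ?gt_eqF //.
  by rewrite poweRe1 // rearrangement_ge0.
- have := Pf _ (leb_measurable_fun_signed_powR _ _ r0 mf).
  by congr P; apply/funext => t; rewrite rearrangement_signed_powR.
Qed.

End Rearrangement.

Theorem proposition3p10 (R : realType) (n : nat) (m p q : R)
  (u v w : R -> R) (C : R) :
  (0 < n)%N -> 0 < m -> 0 < p -> 0 < q ->
  weight u -> weight v -> admissible u v m p -> weight w -> 0 < C ->
  ((forall f : n.-tuple R -> R, leb_measurable_fun f ->
     ((\int[@lebesgue_measure R]_(t in ioinf 0)
          ((w t)%:E * ((rearrangement f t) `^ q))) `^ q^-1
      <= C%:E *
         (\int[@lebesgue_measure R]_(t in ioinf 0)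
            ((v t)%:E *
             ((\int[@lebesgue_measure R]_(s in ioinf t)
                 ((u s)%:E * ((rearrangement f s) `^ m))) `^ (p / m)))) `^ p^-1)%E)
   <->
   (forall f : n.-tuple R -> R, leb_measurable_fun f ->
     ((\int[@lebesgue_measure R]_(t in ioinf 0)
          ((w t)%:E * ((rearrangement f t) `^ (q / m)))) `^ (m / q)
      <= (C `^ m)%:E *
         (\int[@lebesgue_measure R]_(t in ioinf 0)
            ((v t)%:E *
             ((\int[@lebesgue_measure R]_(s in ioinf t)
                 ((u s)%:E * rearrangement f s)) `^ (p / m)))) `^ (m / p))%E)).
Proof.
move=> _ m0 _ _ _ _ _ _ C0.
(* [ineq F]: the first inequality with [F] for the [m]-th power of [f^*]. *)
pose ineq (F : R -> \bar R) : Prop :=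
  ((\int[@lebesgue_measure R]_(t in ioinf 0) ((w t)%:E * F t `^ (q / m))) `^ q^-1
   <= C%:E * (\int[@lebesgue_measure R]_(t in ioinf 0)
       ((v t)%:E * (\int[@lebesgue_measure R]_(s in ioinf t)
                      ((u s)%:E * F s)) `^ (p / m))) `^ p^-1)%E.
have w_powE (f : n.-tuple R -> R) :
    (fun t => (w t)%:E * (rearrangement f t `^ m) `^ (q / m))%E =
    (fun t => (w t)%:E * rearrangement f t `^ q)%E.
  by apply/funext => t; rewrite -poweRrM mulrC divfK ?gt_eqF.
transitivity (forall f : n.-tuple R -> R, leb_measurable_fun f ->
               ineq (fun t => rearrangement f t `^ m)%E).
  by split=> ineqf f mf; have := ineqf f mf; rewrite /ineq w_powE.
have [powR_to_id id_to_powR] := forall_rearrangement_powR (n := n) m ineq m0.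
split=> ineqf f mf.
- by have := powR_to_id ineqf f mf; rewrite /ineq; move/(lee_poweR_scale m0 C0).
- apply: id_to_powR f mf => {}f {}mf.
  by rewrite /ineq; apply/(lee_poweR_scale m0 C0)/ineqf.
Qed.
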